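(* Let $X$ and $Y$ be non-negative random variables with absolutely continuous distribution functions $F$ and $G$ (survival functions $\bar F=1-F$, $\bar G=1-G$), and let $\alpha,\beta>0$. Define $$R_{\alpha,\beta}(\bar F,\bar G,t)=\int_t^\infty\left(\frac{\bar F(x)}{\bar F(t)}\right)^{\alpha}\left(\frac{\bar G(x)}{\bar G(t)}\right)^{\beta}dx,\quad t\ge0.$$ If $R_{\alpha,\beta}(\bar F,\bar G,t)=c$ for all $t\ge 0$, where $c$ is a positive constant, then $F$ is an exponential distribution if and only if $G$ is an exponential distribution.
   Context: $R_{\alpha,\beta}(\bar F,\bar G,t)$ is the dynamic relative cumulative residual information measure between the residual lives $(X-t\mid X>t)$ and $(Y-t\mid Y>t)$. *)

From HB Require Import structures.
From mathcomp Require Import all_boot all_order all_algebra.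
From mathcomp Require Import all_classical all_reals all_analysis.
Set Implicit Arguments. Unset Strict Implicit. Unset Printing Implicit Defensive.
Import Order.TTheory GRing.Theory Num.Theory.
Local Open Scope classical_set_scope.
Local Open Scope ring_scope.

Definition nonneg_abs_cont_cdf {R : realType} (F : R -> R) : Prop :=
  (exists f : R -> R,
      measurable_fun setT f /\ (forall x, 0 <= f x) /\
      ((\int[@lebesgue_measure R]_(y in setT) (f y)%:E)%E = 1%E) /\
      (forall x, (F x)%:E = (\int[@lebesgue_measure R]_(y in `]-oo, x]) (f y)%:E)%E))
  /\ (forall x, x < 0 -> F x = 0).

Definition survival {R : realType} (F : R -> R) : R -> R := fun x => 1 - F x.

Definition is_exponential_cdf {R : realType} (F : R -> R) : Prop :=
  exists lambda : R, 0 < lambda /\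
    forall x, F x = if x < 0 then 0 else 1 - expR (- (lambda * x)).

Definition Rab {R : realType} (a b : R) (Fb Gb : R -> R) (t : R) : \bar R :=
  (\int[@lebesgue_measure R]_(x in `[t, +oo[)
     ((powR (Fb x / Fb t) a) * (powR (Gb x / Gb t) b))%:E)%E.

From HB Require Import structures.
From mathcomp Require Import all_boot all_order all_algebra.
From mathcomp Require Import all_classical all_reals all_analysis.
From mathcomp Require Import ring lra measurable_realfun.
Set Implicit Arguments. Unset Strict Implicit. Unset Printing Implicit Defensive.
Import Order.TTheory GRing.Theory Num.Theory.
Local Open Scope classical_set_scope.
Local Open Scope ring_scope.

(* Put H(t) = Fb(t)^a Gb(t)^b.  A constant measure c means \int_t^oo H = c H(t)
   for t >= 0; as H is nonincreasing, comparing the integral over [s, t[ with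
   its bounds H(t)(t - s) and H(s)(t - s) gives
   H(t)(t - s) <= c (H(s) - H(t)) <= H(s)(t - s).  Then K(t) = H(t) e^(t/c)
   has increments of order (t - s)^2, so K is constant and H(t) = e^(-t/c).
   If Fb(t) = e^(-l t), this leaves Gb(t)^b = e^(-(1/c - l a) t), and the rate
   (1/c - l a)/b is positive because G is the cdf of a density; the converse
   direction is symmetric. *)

Section SandwichExp.
Context {R : realType}.

Lemma sandwich_expR_step (u v x : R) : 0 <= v <= 1 -> 0 <= u <= 1 ->
  0 <= x <= 1/2 -> v * x <= u - v <= u * x -> `|expR x * v - u| <= 2 * x ^+ 2.
Proof.
move=> /andP[v0 v1] /andP[u0 u1] /andP[x0 x2] /andP[lo up].
have exp_lb : 1 + x <= expR x := expR_ge1Dx x.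
have exp_ub : expR x * (1 - x) <= 1.
  by rewrite -ler_pdivlMl ?expR_gt0 // mulr1 -expRN expR_ge1Dx.
have exp_le2 : expR x <= 2 by nra.
rewrite ler_norml; apply/andP; split.
- have : u * ((1 + x) * (1 - x)) <= u * (expR x * (1 - x)).
    by apply: ler_wpM2l => //; nra.
  nra.
- have : v * (expR x - 1 - x) <= v * (2 * x ^+ 2) by apply: ler_wpM2l => //; nra.
  nra.
Qed.

Lemma quadratic_increments_const (f : R -> R) (C d T : R) :
  0 <= C -> 0 < d -> 0 <= T ->
  (forall s t, 0 <= s -> s <= t <= T -> t - s <= d ->
     `|f t - f s| <= C * (t - s) ^+ 2) ->
  f T = f 0.
Proof.
move=> C0 d0 T0 incr.
have telescope n h : 0 <= h <= d -> n%:R * h <= T ->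
    `|f (n%:R * h) - f 0| <= n%:R * (C * h ^+ 2).
  move=> /andP[h0 hd]; elim: n => [|n IH] nhT; first by rewrite !mul0r subrr normr0.
  have nh0 : 0 <= n%:R * h by rewrite mulr_ge0.
  have nhT' : n%:R * h <= T by apply: le_trans nhT; rewrite ler_wpM2r // ler_nat.
  have nSh : n.+1%:R * h = n%:R * h + h by rewrite mulrSr mulrDl mul1r.
  have last_step := incr (n%:R * h) (n.+1%:R * h) nh0.
  rewrite nSh addrAC subrr add0r in last_step nhT *.
  rewrite (_ : _ - f 0 = (f (n%:R * h + h) - f (n%:R * h)) + (f (n%:R * h) - f 0));
    last by ring.
  apply: le_trans (ler_normD _ _) _; rewrite mulrSr mulrDl mul1r addrC.
  by apply: lerD; [exact: IH | apply: last_step; rewrite ?lerDl ?h0 ?nhT].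
apply/eqP; rewrite -subr_eq0 -normr_le0; apply/ler_addgt0Pr => e e0.
rewrite add0r.
pose n := (Num.truncn (T / d + C * T ^+ 2 / e)).+1.
have n_gt : T / d + C * T ^+ 2 / e < n%:R := truncnS_gt _.
have n0 : 0 < n%:R :> R by rewrite ltr0n.
have CT_e : 0 <= C * T ^+ 2 / e by rewrite divr_ge0 ?mulr_ge0 ?sqr_ge0 ?(ltW e0).
have Td : 0 <= T / d by rewrite divr_ge0 ?(ltW d0).
have h_le_d : T / n%:R <= d.
  by rewrite ler_pdivrMr // -ler_pdivrMl // mulrC; lra.
have nT : n%:R * (T / n%:R) = T by rewrite mulrC divfK ?gt_eqF.
have := telescope n (T / n%:R); rewrite nT.
move=> /(_ _ (lexx T)) /le_trans; apply; first by rewrite h_le_d andbT divr_ge0 // ltW.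
have -> : n%:R * (C * (T / n%:R) ^+ 2) = C * T ^+ 2 / n%:R.
  by field; rewrite gt_eqF.
by rewrite ler_pdivrMr // -ler_pdivrMl // [_^-1 * _]mulrC; lra.
Qed.

Lemma sandwich_expR (H : R -> R) (c : R) : 0 < c ->
  (forall x, 0 <= x -> 0 <= H x <= 1) ->
  (forall s t, 0 <= s -> s <= t ->
     H t * (t - s) <= c * (H s - H t) <= H s * (t - s)) ->
  forall T, 0 <= T -> H T = H 0 * expR (- (T / c)).
Proof.
move=> c0 H01 sandwich T T0.
pose K t := H t * expR (t / c).
suff : K T = K 0.
  by rewrite /K mul0r expR0 mulr1 => <-; rewrite -mulrA -expRD subrr expR0 mulr1.
apply: (@quadratic_increments_const K (2 * expR (T / c) / c ^+ 2) (c / 2)) => //.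
- by rewrite divr_ge0 ?sqr_ge0 ?mulr_ge0 ?expR_ge0.
- by rewrite divr_gt0.
move=> s t s0 /andP[st tT] tsd.
set x := (t - s) / c.
have ts : t - s = c * x by rewrite mulrC divfK ?gt_eqF.
have x0 : 0 <= x by rewrite divr_ge0 ?subr_ge0 ?(ltW c0).
have x_half : x <= 1 / 2 by rewrite -(ler_pM2l c0) -ts; lra.
have -> : K t - K s = expR (s / c) * (expR x * H t - H s).
  rewrite /K (_ : t / c = s / c + x) ?expRD; first by ring.
  by rewrite /x mulrBl addrC subrK.
rewrite normrM ger0_norm ?expR_ge0 //.
have /andP[lo up] := sandwich s t s0 st.
have -> : 2 * expR (T / c) / c ^+ 2 * (t - s) ^+ 2 = expR (T / c) * (2 * x ^+ 2).
  by rewrite ts; field; rewrite gt_eqF.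
apply: ler_pM; rewrite ?expR_ge0 ?mulr_ge0 ?sqr_ge0 //.
  by rewrite ler_expR ler_pM2r ?invr_gt0 //; lra.
apply: sandwich_expR_step; rewrite ?H01 ?x0 ?x_half //; try lra.
rewrite ts (mulrCA (H t)) (mulrCA (H s)) !ler_pM2l // in lo up.
by rewrite lo up.
Qed.

End SandwichExp.

Lemma ge0_integral_bigcup_eq0 d (T : measurableType d) (R : realType)
    (mu : measure T R) (f : T -> R) (S : (set T)^nat) :
  measurable_fun setT f -> (forall x, 0 <= f x) ->
  nondecreasing_seq S -> (forall n, measurable (S n)) ->
  (forall n, (\int[mu]_(x in S n) (f x)%:E = 0)%E) ->
  (\int[mu]_(x in \bigcup_n S n) (f x)%:E = 0)%E.
Proof.
move=> mf f0 S_nd mS S0.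
have : (\int[mu]_(x in S n) (f x)%:E @[n --> \oo] -->
          \int[mu]_(x in \bigcup_n S n) (f x)%:E)%E.
  apply: ge0_nondecreasing_set_cvg_integral => // [n | n x _].
  - by apply/measurable_EFinP; exact: measurable_funS measurableT (@subsetT _ _) mf.
  - by rewrite lee_fin.
under eq_fun do rewrite S0.
by move=> /cvg_lim <-; rewrite ?lim_cst.
Qed.

Section DensityCdf.
Context {R : realType}.
Local Notation mu := (@lebesgue_measure R).
Variables (F f : R -> R).
Hypotheses (mf : measurable_fun setT f) (f_ge0 : forall x, 0 <= f x)
  (f_mass1 : (\int[mu]_(y in setT) (f y)%:E = 1)%E)
  (F_int : forall x, ((F x)%:E = \int[mu]_(y in `]-oo, x]) (f y)%:E)%E)
  (F_neg : forall x, x < 0 -> F x = 0).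

Let mEf (D : set R) : measurable_fun D (EFin \o f).
Proof. by apply/measurable_EFinP; exact: measurable_funS measurableT (@subsetT _ _) mf. Qed.

Let Ef_ge0 x : (0 <= (f x)%:E)%E.
Proof. by rewrite lee_fin. Qed.

Lemma density_cdf_ge0 x : 0 <= F x.
Proof. by rewrite -lee_fin F_int; apply: integral_ge0. Qed.

Lemma density_cdf_le1 x : F x <= 1.
Proof. rewrite -lee_fin F_int -f_mass1; apply: ge0_subset_integral => //; exact: mEf. Qed.

Lemma density_cdf_nondecreasing : {homo F : x y / x <= y}.
Proof.
move=> x y xy; rewrite -lee_fin !F_int; apply: ge0_subset_integral => //.
  exact: mEf.
by move=> z /=; rewrite !in_itv /= => /le_trans; apply.
Qed.

Lemma density_cdf0 : F 0 = 0.
Proof.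
suff : ((F 0)%:E = 0)%E by case.
rewrite F_int -integral_itv_bndo_bndc; last exact: mEf.
have -> : `]-oo, 0[%classic = \bigcup_n `]-oo, - (n.+1%:R)^-1]%classic :> set R.
  apply/seteqP; split => [x /= | x [n _] /=]; rewrite !in_itv /=.
  - move=> x0; exists (Num.truncn (- x)^-1) => //=; rewrite in_itv /= lerNr.
    rewrite -[X in _ <= X]invrK lef_pV2 ?posrE ?invr_gt0 ?oppr_gt0 ?ltr0n //.
    exact/ltW/truncnS_gt.
  - by move/le_lt_trans; apply; rewrite oppr_lt0 invr_gt0 ltr0n.
apply: ge0_integral_bigcup_eq0 => // [m n mn | n].
- rewrite subsetEset => z /=; rewrite !in_itv /= => /le_trans; apply.
  by rewrite lerN2 lef_pV2 ?posrE ?ltr0n // ler_nat.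
- by rewrite -F_int F_neg // oppr_lt0 invr_gt0 ltr0n.
Qed.

Lemma density_cdf_not_vanishing : ~ (forall x, 0 <= x -> F x = 0).
Proof.
move=> F0; move: f_mass1.
have -> : setT = \bigcup_n `]-oo, n%:R]%classic :> set R.
  apply/seteqP; split => x // _; exists (Num.truncn `|x|).+1 => //=.
  rewrite in_itv /=; have := truncnS_gt `|x|; have := ler_norm x; lra.
rewrite ge0_integral_bigcup_eq0 // => [[] /eqP | m n mn | n].
- by rewrite eq_sym oner_eq0.
- by rewrite subsetEset => z /=; rewrite !in_itv /= => /le_trans; apply; rewrite ler_nat.
- by rewrite -F_int F0.
Qed.

End DensityCdf.

Lemma powRVn {R : realType} (x r : R) : 0 < x -> x^-1 `^ r = (x `^ r)^-1.
Proof. by move=> x0; rewrite -powR_inv1 ?ltW // -powRrM mulN1r powRN. Qed.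

(* Uses the junk values x / 0 = 0 and 0 `^ a = 0 for a != 0. *)
Lemma Rab_eq0 {R : realType} {a b : R} {Fb Gb : R -> R} {t : R} :
  a != 0 -> b != 0 -> Fb t = 0 \/ Gb t = 0 -> Rab a b Fb Gb t = 0%E.
Proof.
move=> a0 b0 FGt0; rewrite /Rab -[RHS](integral0 (@lebesgue_measure R) `[t, +oo[).
apply: eq_integral => x _; congr EFin.
by case: FGt0 => ->; rewrite invr0 mulr0 powR0 ?(mul0r, mulr0).
Qed.

Section ConstantResidualInformation.
Context {R : realType}.
Local Notation mu := (@lebesgue_measure R).
Variables (Fb Gb : R -> R) (a b c : R).
Hypotheses (a_gt0 : 0 < a) (b_gt0 : 0 < b) (c_gt0 : 0 < c).
Hypotheses (Fb_ge0 : forall x, 0 <= Fb x) (Fb_le1 : forall x, Fb x <= 1).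
Hypotheses (Gb_ge0 : forall x, 0 <= Gb x) (Gb_le1 : forall x, Gb x <= 1).
Hypotheses (Fb_nonincr : nonincreasing_fun Fb) (Gb_nonincr : nonincreasing_fun Gb).
Hypotheses (Fb0 : Fb 0 = 1) (Gb0 : Gb 0 = 1).
Hypothesis Rab_const : forall t, 0 <= t -> Rab a b Fb Gb t = c%:E.

Let H x := Fb x `^ a * Gb x `^ b.

Lemma survival_gt0 t : 0 <= t -> 0 < Fb t /\ 0 < Gb t.
Proof.
move=> t0.
have FGt_neq0 : ~ (Fb t = 0 \/ Gb t = 0).
  move/(Rab_eq0 (lt0r_neq0 a_gt0) (lt0r_neq0 b_gt0)); rewrite Rab_const //.
  by case=> /eqP; rewrite gt_eqF.
by split; rewrite lt_def ?Fb_ge0 ?Gb_ge0 andbT; apply/eqP => FGt0; apply: FGt_neq0; auto.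
Qed.

Let H01 x : 0 <= H x <= 1.
Proof.
have powR_le1 (y r : R) : 0 <= y -> y <= 1 -> 0 <= r -> y `^ r <= 1.
  move=> y0 y1 r0; apply: (@le_trans _ _ (1 `^ r)); last by rewrite powR1.
  by apply: ge0_ler_powR; rewrite ?nnegrE.
rewrite /H mulr_ge0 ?powR_ge0 //= mulr_ile1 ?powR_ge0 //;
  by rewrite powR_le1 ?Fb_ge0 ?Gb_ge0 ?Fb_le1 ?Gb_le1 ?ltW.
Qed.

Let H_nonincr : nonincreasing_fun H.
Proof.
move=> x y xy; rewrite /H; apply: ler_pM; rewrite ?powR_ge0 //; apply: ge0_ler_powR;
  by rewrite ?nnegrE ?Fb_ge0 ?Gb_ge0 ?Fb_nonincr ?Gb_nonincr ?(ltW a_gt0) ?(ltW b_gt0).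
Qed.

Let H_gt0 t : 0 <= t -> 0 < H t.
Proof. by move=> /survival_gt0[Ft Gt]; rewrite mulr_gt0 ?powR_gt0. Qed.

Let mEH (D : set R) : measurable D -> measurable_fun D (EFin \o H).
Proof. by move=> mD; apply/measurable_EFinP; exact: nonincreasing_measurable mD H_nonincr. Qed.

Lemma integral_survival_powR t : 0 <= t ->
  (\int[mu]_(x in `[t, +oo[) (H x)%:E = (c * H t)%:E)%E.
Proof.
move=> t0; have [Ft Gt] := survival_gt0 t0.
have integrand x : (Fb x / Fb t) `^ a * (Gb x / Gb t) `^ b = (H t)^-1 * H x.
  rewrite !powRM ?invr_ge0 ?Fb_ge0 ?Gb_ge0 ?ltW // !powRVn // /H invfM.
  ring.
have := Rab_const t0; rewrite /Rab.
under eq_integral => x _ do rewrite integrand EFinM.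
rewrite ge0_integralZl_EFin ?invr_ge0 ?(ltW (H_gt0 t0)) //; last 2 first.
- by move=> x _; rewrite lee_fin; case/andP: (H01 x).
- exact: mEH.
move=> /(congr1 (fun z => (H t)%:E * z)%E).
by rewrite muleA -EFinM divff ?gt_eqF ?H_gt0 // mul1e -EFinM mulrC.
Qed.

Lemma survival_powR_sandwich s t : 0 <= s -> s <= t ->
  H t * (t - s) <= c * (H s - H t) <= H s * (t - s).
Proof.
move=> s0 st; have t0 := le_trans s0 st.
have H_ge0 x : (0 <= (H x)%:E)%E by rewrite lee_fin; case/andP: (H01 x).
have split_st : `[s, +oo[%classic = `[s, t[%classic `|` `[t, +oo[%classic :> set R.
  by apply: itv_bndbnd_setU; rewrite bnd_simp.
have disj_st : [disjoint `[s, t[%classic & `[t, +oo[%classic :> set R].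
  rewrite disj_set2E; apply/eqP/seteqP; split => z //=.
  by rewrite !in_itv /= andbT => -[/andP[_ /lt_le_trans zt /zt]]; rewrite ltxx.
have := integral_survival_powR s0.
rewrite split_st ge0_integral_setU //; first last.
- by rewrite -split_st; exact: mEH.
rewrite integral_survival_powR //.
have mu_st : mu `[s, t[%classic = (t - s)%:E.
  by rewrite lebesgue_measure_itv /= lte_fin; case: ltgtP st => // <-; rewrite subrr.
have lo : ((H t * (t - s))%:E <= \int[mu]_(x in `[s, t[) (H x)%:E)%E.
  rewrite EFinM -mu_st -integral_cst //.
  apply: ge0_le_integral => //; [by move=> *; exact: H_ge0 | exact: mEH |].
  by move=> x; rewrite /= in_itv /= lee_fin => /andP[_ /ltW xt]; apply: H_nonincr.
have up : (\int[mu]_(x in `[s, t[) (H x)%:E <= (H s * (t - s))%:E)%E.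
  rewrite EFinM -mu_st -integral_cst //.
  apply: ge0_le_integral => //; first exact: mEH.
  by move=> x; rewrite /= in_itv /= lee_fin => /andP[sx _]; apply: H_nonincr.
move=> int_s.
move: lo; rewrite -(leeD2rE (x := (c * H t)%:E)) // int_s -EFinD lee_fin => lo.
move: up; rewrite -(leeD2rE (x := (c * H t)%:E)) // int_s -EFinD lee_fin => up.
by apply/andP; split; lra.
Qed.

Lemma survival_powR_expR t : 0 <= t -> Fb t `^ a * Gb t `^ b = expR (- (t / c)).
Proof.
move=> t0; rewrite -[LHS]/(H t) (sandwich_expR c_gt0 _ survival_powR_sandwich) //.
by rewrite /H Fb0 Gb0 !powR1 mulr1 mul1r.
Qed.

End ConstantResidualInformation.

Section ResidualOfCdfs.
Context {R : realType}.

Lemma survival_of_density_cdf (F : R -> R) : nonneg_abs_cont_cdf F ->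
  [/\ forall x, 0 <= survival F x, forall x, survival F x <= 1,
      nonincreasing_fun (survival F) & survival F 0 = 1].
Proof.
case=> -[f [mf [f_ge0 [f_mass1 F_int]]]] F_neg; rewrite /survival; split.
- by move=> x; rewrite subr_ge0 (density_cdf_le1 mf f_ge0 f_mass1 F_int).
- by move=> x; rewrite lerBlDr lerDl (density_cdf_ge0 f_ge0 F_int).
- by move=> x y xy; rewrite lerD2l lerN2 (density_cdf_nondecreasing mf f_ge0 F_int).
- by rewrite (density_cdf0 mf f_ge0 F_int F_neg) subr0.
Qed.

Lemma constant_Rab_survival_powR (F G : R -> R) (a b c : R) :
  nonneg_abs_cont_cdf F -> nonneg_abs_cont_cdf G -> 0 < a -> 0 < b -> 0 < c ->
  (forall t, 0 <= t -> Rab a b (survival F) (survival G) t = c%:E) ->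
  forall t, 0 <= t -> [/\ 0 < survival F t, 0 < survival G t &
    survival F t `^ a * survival G t `^ b = expR (- (t / c))].
Proof.
move=> /survival_of_density_cdf[F_ge0 F_le1 F_nonincr F0].
move=> /survival_of_density_cdf[G_ge0 G_le1 G_nonincr G0] a0 b0 c0 Rab_const t t0.
have [Ft Gt] := survival_gt0 a0 b0 c0 F_ge0 G_ge0 Rab_const t0.
by split; last exact: survival_powR_expR.
Qed.

Lemma exponential_cdf_transfer (F G : R -> R) (a b c : R) :
  nonneg_abs_cont_cdf G -> 0 < b -> 0 < c ->
  (forall t, 0 <= t -> 0 < survival G t) ->
  (forall t, 0 <= t -> survival F t `^ a * survival G t `^ b = expR (- (t / c))) ->
  is_exponential_cdf F -> is_exponential_cdf G.
Proof.
move=> hG b0 c0 G_gt0 FG_expR [l [_ F_exp]].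
have [[g [mg [g_ge0 [g_mass1 G_int]]]] G_neg] := hG.
have [_ G_le1 _ _] := survival_of_density_cdf hG.
set m := (c^-1 - l * a) / b.
have G_exp t : 0 <= t -> survival G t = expR (- (m * t)).
  move=> t0; have := FG_expR t t0.
  rewrite {1}/survival F_exp ltNge t0 /= subKr -expRM => FG_t.
  have Gb_t : survival G t `^ b = expR (- (t / c) + l * t * a).
    apply: (@mulfI _ (expR (- (l * t) * a))); first by rewrite gt_eqF ?expR_gt0.
    by rewrite FG_t -expRD; congr expR; ring.
  rewrite -[LHS](powRr1 (ltW (G_gt0 t t0))) -(divff (lt0r_neq0 b0)) powRrM Gb_t -expRM.
  by congr expR; rewrite /m; field; rewrite ?lt0r_neq0.
exists m; split; last first.
  move=> x; case: ltP => [/G_neg // | x0].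
  by have := G_exp x x0; rewrite /survival; lra.
case: (ltrgt0P m) => [// | m_lt0 | m0].
- have := G_le1 1; rewrite G_exp // mulr1 expR_le1 oppr_le0.
  by rewrite leNgt m_lt0.
- exfalso; apply: (density_cdf_not_vanishing mg g_ge0 g_mass1 G_int) => x x0.
  by have := G_exp x x0; rewrite m0 mul0r oppr0 expR0 /survival; lra.
Qed.

End ResidualOfCdfs.

Theorem theorem3p1 (R : realType) (F G : R -> R) (alpha beta c : R) :
  nonneg_abs_cont_cdf F -> nonneg_abs_cont_cdf G ->
  0 < alpha -> 0 < beta -> 0 < c ->
  (forall t, 0 <= t -> Rab alpha beta (survival F) (survival G) t = c%:E) ->
  (is_exponential_cdf F <-> is_exponential_cdf G).
Proof.
move=> hF hG a0 b0 c0 Rab_const.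
have FG := constant_Rab_survival_powR hF hG a0 b0 c0 Rab_const.
split; [apply: (exponential_cdf_transfer (a := alpha) hG b0 c0) |
        apply: (exponential_cdf_transfer (a := beta) hF a0 c0)] => t /FG[] //.
by move=> _ _ <-; rewrite mulrC.
Qed.
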